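(* Let $X_1,X_2,Y$ be cellular spaces with $X_1,X_2$ compact, let $r\ge0$, and let $a_i\colon X_i\to Y$, $i=1,2$, be maps such that the constant map $X_i\to Y$ is strongly $r$-similar to $a_i$. Then the constant map $X_1\vee X_2\to Y$ is strongly $r$-similar to $a_1\,\bar\vee\,a_2\colon X_1\vee X_2\to Y$ (the map restricting to $a_i$ on $X_i$).
   Context: Cellular space = based CW complex; maps based. Strong similarity: $\langle W\rangle$ = free abelian group on a set $W$. $Y^X$ = based maps (compact-open), based at the constant map; $Y^X_a$ = path component of $a$; $V\mapsto V|_R$ restriction; $\mathcal F_n(X)$ = finite $R\subseteq X$ containing the basepoint with $|R|\le n+1$; $\langle Y^X\rangle^{(s)}=\{V:V|_R=0\ \forall R\in\mathcal F_{s-1}(X)\}$. For unbased $U,V$: $V^{(U)}$ = unbased maps; $\Xi^U(v)$ = constant map at $v$; for $U=\coprod_iU_i$ the combining product $\boxed{\sqcup}_i\langle w_i\rangle=\langle w\rangle$, $w|_{U_i}=w_i$, multilinear. For nonempty finite $E$: simplex $\Delta E$, faces $\Delta F$; layouts = sets $A$ of pairwise disjoint nonempty subsets; $\Delta[A]=\coprod_{F\in A}\Delta F$; $S\in\langle V^{(\Delta E)}\rangle$ fissile if $S|_{\Delta[A]}=\boxed{\sqcup}_{F\in A}S|_{\Delta F}$ for all layouts. $U\wr X=(U\times X)/(U\times\{x_0\})$, $\#^X(w)(u\wr x)=w(u)(x)$, $\langle (Y^X)^{(U)}\rangle^{(s)}_X=\langle\#^X\rangle^{-1}\langle Y^{U\wr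 X}\rangle^{(s)}$. $a\overset{r}{\approx}b$ iff for each nonempty finite $E$ there is a fissile $S\in\langle (Y^X_a)^{(\Delta E)}\rangle$ with $\langle\Xi^{\Delta E}(b)\rangle-S\in\langle (Y^X)^{(\Delta E)}\rangle^{(r+1)}_X$. *)

From HB Require Import structures.
From mathcomp Require Import all_boot all_order all_algebra finmap.
From mathcomp Require Import all_classical all_reals topology normedtype homotopy.
From mathcomp Require Import Rstruct Rstruct_topology.

Set Implicit Arguments.
Unset Strict Implicit.
Unset Printing Implicit Defensive.

Import Order.TTheory GRing.Theory Num.Theory.
Local Open Scope classical_set_scope.
Local Open Scope ring_scope.

Notation RR := Rdefinitions.R.

Definition sqnorm n (v : 'rV[RR]_n) : RR := \sum_(i < n) v ord0 i ^+ 2.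
Definition cdisk n : set 'rV[RR]_n := [set v | sqnorm v <= 1].
Definition odisk n : set 'rV[RR]_n := [set v | sqnorm v < 1].
Definition sphere n : set 'rV[RR]_n := [set v | sqnorm v = 1].
Arguments cdisk : clear implicits.
Arguments odisk : clear implicits.
Arguments sphere : clear implicits.

Definition ocell (X : topologicalType) (I : Type) (dim : I -> nat)
  (phi : forall i, 'rV[RR]_(dim i) -> X) (i : I) : set X :=
  phi i @` odisk (dim i).
Definition ccell (X : topologicalType) (I : Type) (dim : I -> nat)
  (phi : forall i, 'rV[RR]_(dim i) -> X) (i : I) : set X :=
  phi i @` cdisk (dim i).

Definition CW_structure (X : topologicalType) (I : Type) (dim : I -> nat)
    (phi : forall i, 'rV[RR]_(dim i) -> X) : Prop :=
  (
      (forall i, {within cdisk (dim i), continuous (phi i)}) /\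
      (forall x : X, exists! i, ocell phi i x) /\
      (* phi_i restricted to the open disk is a homeomorphism onto e_i *)
      (forall i u v, odisk (dim i) u -> odisk (dim i) v ->
          phi i u = phi i v -> u = v) /\
      (forall i (U : set 'rV[RR]_(dim i)), open U ->
          exists V : set X, open V /\
            phi i @` (U `&` odisk (dim i)) = V `&` ocell phi i) /\
      (forall i, phi i @` sphere (dim i) `<=`
          \bigcup_(j in [set j | (dim j < dim i)%N]) ocell phi j) /\
      (forall i, finite_set [set j | ccell phi i `&` ocell phi j !=set0]) /\
      (forall A : set X, (forall i, closed (A `&` ccell phi i)) -> closed A)).

Definition cellular (X : ptopologicalType) : Prop :=
  hausdorff_space X /\
  exists (I : Type) (dim : I -> nat) (phi : forall i, 'rV[RR]_(dim i) -> X),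
    CW_structure phi /\ exists i, dim i = 0%N /\ ocell phi i (@point X).

Definition based_map (X Y : ptopologicalType) (f : X -> Y) : Prop :=
  continuous f /\ f (@point X) = @point Y.

Definition cstmap (X Y : ptopologicalType) : X -> Y := fun _ => @point Y.
Arguments cstmap : clear implicits.

Definition path_comp (X Y : ptopologicalType) (a : X -> Y) : set (X -> Y) :=
  [set f | exists g : RR -> {compact-open, X -> Y},
     [/\ {within `[0, 1]%classic, continuous g}, g 0 = a, g 1 = f &
         forall t, `[0, 1]%classic t -> based_map (g t)]].

(* Free abelian groups <W>: an element is represented by a finite formal    *)
(* sum, i.e. a list of (coefficient, generator).  Generators are compared   *)
(* through a relation P (e.g. "agree on the subset U" for maps U -> V,      *)
(* which are represented by functions on an ambient type).                  *)
Definition coef (T G : Type) (P : T -> G -> Prop) (s : seq (int * T)) (g : G)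
  : int := \sum_(p <- s) (if `[< P p.2 g >] then p.1 else 0).

Definition fs_eq (T G : Type) (P : T -> G -> Prop) (s1 s2 : seq (int * T)) :=
  forall g, coef P s1 g = coef P s2 g.

Definition fs_neg (T : Type) (s : seq (int * T)) : seq (int * T) :=
  [seq (- p.1, p.2) | p <- s].

Definition agree_on (A B : Type) (U : set A) (w g : A -> B) : Prop :=
  forall t, U t -> w t = g t.

Definition Simp (E : finType) := {ptws E -> RR}.

Definition simplex (E : finType) : set (Simp E) :=
  [set t | (forall e, 0 <= t e) /\ \sum_(e : E) t e = 1].

Definition face (E : finType) (F : {set E}) : set (Simp E) :=
  [set t | simplex t /\ forall e, e \notin F -> t e = 0].

Definition layout_space (E : finType) (A : {set {set E}}) : set (Simp E) :=
  \bigcup_(F in [set F | F \in A]) face F.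

Definition layout (E : finType) (A : {set {set E}}) : Prop :=
  (forall F, F \in A -> F != finset.set0) /\
  (forall F G, F \in A -> G \in A -> F != G -> F :&: G = finset.set0).

(* the combining product  boxed-sqcup_{F in A} (s restricted to Delta F),
   computed on generators and extended multilinearly: a generator of the
   product is the map on Delta[A] which is the chosen map on each Delta F. *)
Definition glue (E : finType) (V : Type) (F : {set E}) (f h : Simp E -> V)
  : Simp E -> V := fun t => if `[< face F t >] then f t else h t.

Definition combine (E : finType) (V : Type) (v0 : V) (A : {set {set E}})
    (s : seq (int * (Simp E -> V))) : seq (int * (Simp E -> V)) :=
  foldr (fun F acc => [seq (p.1 * q.1, glue F p.2 q.2) | p <- s, q <- acc])
        [:: (1, fun _ => v0)] (enum A).

Definition fissile (E : finType) (V : Type) (v0 : V)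
    (s : seq (int * (Simp E -> V))) : Prop :=
  forall A : {set {set E}}, layout A ->
    fs_eq (agree_on (layout_space A)) s (combine v0 A s).

(* The filtration  <(Y^X)^(Delta E)>^(s)_X = <#^X>^{-1} <Y^(Delta E wr X)>^(s) *)
(* A point of Delta E wr X = (Delta E x X)/(Delta E x {x0}) is represented  *)
(* by a pair (u, x); a set R in F_(s-1)(Delta E wr X) is the basepoint      *)
(* together with the classes of a list q of at most s-1 pairs.  Since all   *)
(* maps involved are based, #^X(w) takes value y0 at the basepoint, so the  *)
(* restriction to R is determined by the values w(u)(x), (u,x) in q.        *)
Definition wr_agree (E : finType) (X Y : Type) (q : seq (Simp E * X))
    (w : Simp E -> X -> Y) (g : Simp E * X -> Y) : Prop :=
  forall j, List.In j q -> w j.1 j.2 = g j.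

Definition in_filtration (E : finType) (X Y : Type) (k : nat)
    (s : seq (int * (Simp E -> X -> Y))) : Prop :=
  forall q : seq (Simp E * X), (size q < k)%N ->
    (forall j, List.In j q -> simplex j.1) ->
    forall g : Simp E * X -> Y, coef (wr_agree q) s g = 0.

Definition simplex_map_into (E : finType) (X Y : ptopologicalType)
    (a : X -> Y) (w : Simp E -> {compact-open, X -> Y}) : Prop :=
  {within @simplex E, continuous w} /\
  forall t, simplex t -> path_comp a (w t).

Definition strongly_similar (X Y : ptopologicalType) (r : nat) (a b : X -> Y)
  : Prop :=
  forall E : finType, (0 < #|E|)%N ->
    exists s : seq (int * (Simp E -> {compact-open, X -> Y})),
      [/\ (forall p, List.In p s -> simplex_map_into a p.2),
          fissile (cstmap X Y : {compact-open, X -> Y}) s &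
          in_filtration (r.+1)
            ((1, fun _ => (b : {compact-open, X -> Y})) :: fs_neg s)].

Definition wedge2 (X1 X2 : ptopologicalType) : ptopologicalType :=
  pwedge (fun b : bool => if b then X1 else X2).

From Pilot Require Import Defs.
From HB Require Import structures.
From mathcomp Require Import all_boot all_order all_algebra finmap.
From mathcomp Require Import all_classical all_reals topology normedtype homotopy.
From mathcomp Require Import Rstruct Rstruct_topology.
From mathcomp Require Import ring.

Set Implicit Arguments.
Unset Strict Implicit.
Unset Printing Implicit Defensive.

Import Order.TTheory GRing.Theory Num.Theory.
Local Open Scope classical_set_scope.
Local Open Scope ring_scope.

(* Let S1, S2 be formal sums of maps Delta E -> Y^X1, Delta E -> Y^X2 witnessing
   the two similarities, and let S be their wedge product, the sum of the
   n1 n2 <w1 v w2>.  A map on X1 v X2, and its restriction to any set of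
   points, is determined by its restrictions to the two summands, so every
   coefficient of S is a coefficient of S1 times a coefficient of S2.  This
   makes S fissile, and on the filtration it turns coef S1 = [a1 agrees] and
   coef S2 = [a2 agrees] into coef S = [a1 agrees] [a2 agrees] = [a1 v a2 agrees].
   The maps w1 v w2 stay in the component of the constant map because wedging
   is jointly continuous in the compact-open topology when X1 and X2 are
   compact Hausdorff. *)

Lemma In_map (A B : Type) (f : A -> B) (s : seq A) z :
  List.In z [seq f x | x <- s] -> exists2 x, List.In x s & z = f x.
Proof.
elim: s => [|x s IH] //= [<-|/IH [y sy ->]]; first by exists x; [left|].
by exists y; [right|].
Qed.

Lemma In_allpairs (A B C : Type) (f : A -> B -> C) (s : seq A) (t : seq B) z :
  List.In z [seq f x y | x <- s, y <- t] ->
  exists x y, [/\ List.In x s, List.In y t & z = f x y].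
Proof.
elim: s => [|x s IH] //; rewrite allpairs_cons => /(@List.in_app_or C) [|/IH].
  by case/(@In_map _ _ (f x)) => y ty ->; exists x, y; split => //; left.
by move=> [x' [y [sx' ty ->]]]; exists x', y; split => //; right.
Qed.

Lemma In_map_filter (A B : Type) (f : A -> B) (P : pred A) (s : seq A) z :
  List.In z [seq f x | x <- s & P x] <-> exists x, [/\ List.In x s, P x & z = f x].
Proof.
elim: s => [|x s IH] /=; first by split => // -[? []].
case: ifP => Px /=; rewrite IH; split.
- case=> [<-|[y [sy Py ->]]]; first by exists x; split => //; left.
  by exists y; split => //; right.
- by case=> y [[<-|sy] Py ->]; [left|right; exists y].
- by case=> y [sy Py ->]; exists y; split => //; right.
- by case=> y [[yx|sy] Py ->]; [rewrite -yx Px in Py|exists y].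
Qed.

Lemma coef_cons (T G : Type) (P : T -> G -> Prop) x s g :
  coef P (x :: s) g = (if `[< P x.2 g >] then x.1 else 0) + coef P s g.
Proof. by rewrite /coef big_cons. Qed.

Lemma coef_cat (T G : Type) (P : T -> G -> Prop) s t g :
  coef P (s ++ t) g = coef P s g + coef P t g.
Proof. by rewrite /coef big_cat. Qed.

Lemma coef_fs_neg (T G : Type) (P : T -> G -> Prop) s g :
  coef P (fs_neg s) g = - coef P s g.
Proof.
rewrite /coef /fs_neg big_map -sumrN; apply: eq_bigr => p _.
by case: ifP; rewrite ?oppr0.
Qed.

Lemma coef_map_scale (T G T2 G2 : Type) (P : T -> G -> Prop) (P2 : T2 -> G2 -> Prop)
    (J : T2 -> T) (b : Prop) (c : int) (s : seq (int * T2)) g g2 :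
  (forall q, List.In q s -> (P (J q.2) g <-> b /\ P2 q.2 g2)) ->
  coef P [seq (c * q.1, J q.2) | q <- s] g =
  (if `[< b >] then c else 0) * coef P2 s g2.
Proof.
elim: s => [|q s IH] PJ; first by rewrite /coef !big_nil mulr0.
rewrite /= !coef_cons IH; last by move=> q' sq'; apply: PJ; right.
rewrite (asbool_equiv_eq (PJ q (or_introl erefl))) asbool_and.
by case: `[< b >]; case: `[< P2 q.2 g2 >] => /=; ring.
Qed.

Lemma coef_allpairs (T G T1 T2 G1 G2 : Type) (P : T -> G -> Prop)
    (P1 : T1 -> G1 -> Prop) (P2 : T2 -> G2 -> Prop) (J : T1 -> T2 -> T)
    (s1 : seq (int * T1)) (s2 : seq (int * T2)) g g1 g2 :
  (forall p q, List.In p s1 -> List.In q s2 ->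
     (P (J p.2 q.2) g <-> P1 p.2 g1 /\ P2 q.2 g2)) ->
  coef P [seq (p.1 * q.1, J p.2 q.2) | p <- s1, q <- s2] g =
  coef P1 s1 g1 * coef P2 s2 g2.
Proof.
elim: s1 => [|p s1 IH] PJ; first by rewrite /coef !big_nil mul0r.
rewrite allpairs_cons coef_cat coef_cons mulrDl IH; last first.
  by move=> ? ? ?; apply: PJ; right.
by congr (_ + _); apply: coef_map_scale => q; apply: PJ; left.
Qed.

Lemma compact_locally_compact (X : topologicalType) :
  compact [set: X] -> locally_compact [set: X].
Proof. by move=> cX x _; exists setT; [exact: filterT|split=> //; exact: closedT]. Qed.

Definition wedge2_lift (X1 X2 : ptopologicalType) (b : bool)
  : (if b then X1 else X2) -> wedge2 X1 X2 := @wedge_lift bool _ _ b.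
Arguments wedge2_lift : clear implicits.

Section WedgeOfTwo.
Variables X1 X2 : ptopologicalType.
Local Notation wedge2_lift := (wedge2_lift X1 X2).

Definition wedge2_fun (Z : Type) (f1 : X1 -> Z) (f2 : X2 -> Z) : wedge2 X1 X2 -> Z :=
  wedge_fun (fun b => if b return (if b then X1 else X2) -> Z then f1 else f2).

Lemma wedge2_liftP (x : wedge2 X1 X2) :
  (exists y : X1, x = wedge2_lift true y) \/ (exists y : X2, x = wedge2_lift false y).
Proof.
by rewrite -[x](@reprK _ (wedge2 X1 X2)); case: (repr x) => -[] y; [left|right]; exists y.
Qed.

Lemma wedge2_pointE : @point (wedge2 X1 X2) = wedge2_lift true point.
Proof. exact: (@wedge_liftE _ _ (fun b => point) true point (@point bool) point). Qed.

Section Wedge2Fun.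
Variables (Z : Type) (f1 : X1 -> Z) (f2 : X2 -> Z).
Hypothesis f12 : f1 point = f2 point.

Lemma wedge2_fun_lift1 y : wedge2_fun f1 f2 (wedge2_lift true y) = f1 y.
Proof. by rewrite /wedge2_fun wedge_lift_funE // => -[] []. Qed.

Lemma wedge2_fun_lift2 y : wedge2_fun f1 f2 (wedge2_lift false y) = f2 y.
Proof. by rewrite /wedge2_fun wedge_lift_funE // => -[] []. Qed.

Lemma wedge2_funP (h : wedge2 X1 X2 -> Z) :
  wedge2_fun f1 f2 = h <-> f1 = h \o wedge2_lift true /\ f2 = h \o wedge2_lift false.
Proof.
split=> [<-|[E1 E2]].
  by split; apply: funext => y /=; rewrite ?wedge2_fun_lift1 ?wedge2_fun_lift2.
apply: funext => x; case: (wedge2_liftP x) => -[y ->].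
  by rewrite wedge2_fun_lift1 E1.
by rewrite wedge2_fun_lift2 E2.
Qed.
End Wedge2Fun.

Variable Y : ptopologicalType.

Lemma wedge2_fun_cst : wedge2_fun (cstmap X1 Y) (cstmap X2 Y) = cstmap (wedge2 X1 X2) Y.
Proof. exact/wedge2_funP. Qed.

Lemma based_wedge2_fun (f1 : X1 -> Y) (f2 : X2 -> Y) :
  based_map f1 -> based_map f2 -> based_map (wedge2_fun f1 f2).
Proof.
move=> [cf1 f1p] [cf2 f2p]; have f12 : f1 point = f2 point by rewrite f1p f2p.
split; last by rewrite wedge2_pointE wedge2_fun_lift1.
by apply: wedge_fun_continuous => [[]|[] []].
Qed.

Definition wedge2_join (A : Type) (p : A -> X1 -> Y) (q : A -> X2 -> Y)
  : A -> wedge2 X1 X2 -> Y := fun t => wedge2_fun (p t) (q t).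

Lemma agree_on_wedge2 (A : Type) (U : set A) (p : A -> X1 -> Y) (q : A -> X2 -> Y)
    (g : A -> wedge2 X1 X2 -> Y) :
  (forall t, U t -> p t point = q t point) ->
  agree_on U (wedge2_join p q) g <->
  agree_on U p (fun t => g t \o wedge2_lift true) /\
  agree_on U q (fun t => g t \o wedge2_lift false).
Proof.
move=> pq; split=> [pqg|[pg qg] t Ut].
  by split=> t Ut; have [] := (wedge2_funP (pq t Ut) (g t)).1 (pqg t Ut).
exact/(wedge2_funP (pq t Ut))/(conj (pg t Ut) (qg t Ut)).
Qed.

End WedgeOfTwo.

Lemma subspace_based_extension (T : topologicalType) (X Y : ptopologicalType)
    (A : set T) (h : T -> {compact-open, X -> Y}) :
  {within A, continuous h} -> (forall t, A t -> based_map (h t)) ->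
  exists2 h' : subspace A -> {compact-open, X -> Y},
    continuous h' /\ (forall t, based_map (h' t)) & {in A, h' =1 h}.
Proof.
move=> ch bh; pose h' (t : subspace A) := if `[< A t >] then h t else cstmap X Y.
have h'E : {in A, h' =1 h} by move=> t; rewrite inE => At; rewrite /h' asboolT.
exists h' => //; split; first by apply: subspace_eq_continuous ch => t At; rewrite h'E.
move=> t; rewrite /h'; case: asboolP => [/bh //|_].
by split; [exact: cst_continuous|].
Qed.

Lemma path_comp_based (X Y : ptopologicalType) (a f : X -> Y) :
  path_comp a f -> based_map f.
Proof. by move=> [g [_ _ <-]]; apply; rewrite /= in_itv /= lexx ler01. Qed.

Section CompactOpen.
Variables (X1 X2 Y : ptopologicalType).
Hypotheses (cX1 : compact [set: X1]) (cX2 : compact [set: X2]).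
Hypotheses (hX1 : hausdorff_space X1) (hX2 : hausdorff_space X2).

(* Compactness of X1 and X2 is what makes the uncurried families jointly
   continuous, so that the library's joint continuity of wedges applies. *)
Lemma continuous_wedge2_join (T : topologicalType) (h1 : T -> {compact-open, X1 -> Y})
    (h2 : T -> {compact-open, X2 -> Y}) :
  continuous h1 -> continuous h2 ->
  (forall t, based_map (h1 t)) -> (forall t, based_map (h2 t)) ->
  continuous (wedge2_join h1 h2 : T -> {compact-open, wedge2 X1 X2 -> Y}).
Proof.
move=> ch1 ch2 bh1 bh2.
pose k b : T -> (if b then X1 else X2) -> Y :=
  if b return T -> (if b then X1 else X2) -> Y then h1 else h2.
have kc b : continuous (uncurry (k b)).
  case: b; apply: continuous_uncurry => //; try exact: compact_locally_compact.
    by move=> t; case: (bh1 t).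
  by move=> t; case: (bh2 t).
have kp t b b' : k b t point = k b' t point.
  by case: (bh1 t) (bh2 t) => _ p1 [_ p2]; case: b; case: b' => /=; rewrite ?p1 ?p2.
have clp b : closed [set (point : if b then X1 else X2)].
  by case: b; apply: accessible_closed_set1; apply: hausdorff_accessible.
suff -> : wedge2_join h1 h2 = fun t => wedge_fun (k^~ t).
  exact: continuous_curry_fun (wedge_fun_joint_continuous finite_finset clp kp kc).
by apply: funext => t; congr wedge_fun; apply: functional_extensionality_dep => -[].
Qed.

Lemma within_continuous_wedge2_join (T : topologicalType) (A : set T)
    (h1 : T -> {compact-open, X1 -> Y}) (h2 : T -> {compact-open, X2 -> Y}) :
  {within A, continuous h1} -> {within A, continuous h2} ->
  (forall t, A t -> based_map (h1 t)) -> (forall t, A t -> based_map (h2 t)) ->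
  {within A, continuous (wedge2_join h1 h2 : T -> {compact-open, wedge2 X1 X2 -> Y})}.
Proof.
move=> ch1 ch2 bh1 bh2.
have [h1' [ch1' bh1'] h1E] := subspace_based_extension ch1 bh1.
have [h2' [ch2' bh2'] h2E] := subspace_based_extension ch2 bh2.
apply: subspace_eq_continuous (continuous_wedge2_join ch1' ch2' bh1' bh2') => t At.
by rewrite /wedge2_join h1E ?h2E.
Qed.

Lemma path_comp_wedge2 (a1 f1 : X1 -> Y) (a2 f2 : X2 -> Y) :
  path_comp a1 f1 -> path_comp a2 f2 ->
  path_comp (wedge2_fun a1 a2) (wedge2_fun f1 f2).
Proof.
move=> [g1 [cg1 g10 g11 bg1]] [g2 [cg2 g20 g21 bg2]].
exists (wedge2_join g1 g2); split.
- exact: within_continuous_wedge2_join.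
- by rewrite /wedge2_join g10 g20.
- by rewrite /wedge2_join g11 g21.
- by move=> t It; apply: based_wedge2_fun; [apply: bg1|apply: bg2].
Qed.

Lemma simplex_map_into_wedge2 (E : finType) (a1 : X1 -> Y) (a2 : X2 -> Y)
    (w1 : Simp E -> {compact-open, X1 -> Y}) (w2 : Simp E -> {compact-open, X2 -> Y}) :
  simplex_map_into a1 w1 -> simplex_map_into a2 w2 ->
  simplex_map_into (wedge2_fun a1 a2) (wedge2_join w1 w2).
Proof.
move=> [cw1 pw1] [cw2 pw2]; split=> [|t St].
  by apply: within_continuous_wedge2_join => // t St; apply: path_comp_based;
    [exact: pw1|exact: pw2].
exact: path_comp_wedge2 (pw1 t St) (pw2 t St).
Qed.

End CompactOpen.

Definition combine_seq (E : finType) (V : Type) (v0 : V) (l : seq {set E})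
    (s : seq (int * (Simp E -> V))) : seq (int * (Simp E -> V)) :=
  foldr (fun (F : {set E}) (acc : seq (int * (Simp E -> V))) =>
           [seq (p.1 * q.1, Defs.glue F p.2 q.2) | p <- s, q <- acc])
        [:: (1, fun _ => v0)] l.

Lemma combineE (E : finType) (V : Type) (v0 : V) (A : {set {set E}})
    (s : seq (int * (Simp E -> V))) :
  combine v0 A s = combine_seq v0 (enum A) s.
Proof. by []. Qed.

Lemma coef_glue (E : finType) (V : Type) (U : set (Simp E)) (F : {set E})
    (s s' : seq (int * (Simp E -> V))) g :
  coef (agree_on U) [seq (p.1 * q.1, Defs.glue F p.2 q.2) | p <- s, q <- s'] g =
  coef (agree_on (U `&` face F)) s g * coef (agree_on (U `&` ~` face F)) s' g.
Proof.
apply: coef_allpairs => p q _ _; rewrite /agree_on /Defs.glue; split.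
  by move=> pqg; split=> t [Ut Ft]; have := pqg t Ut; [rewrite asboolT|rewrite asboolF].
by move=> [pg qg] t Ut; case: asboolP => Ft; [apply: pg|apply: qg].
Qed.

Definition chain_based_on (A : Type) (X Y : ptopologicalType) (U : set A)
    (S : seq (int * (A -> {compact-open, X -> Y}))) : Prop :=
  forall p, List.In p S -> forall t, U t -> p.2 t point = point.

Section WedgeChain.
Variables (X1 X2 Y : ptopologicalType).

Definition wedge2_chain (A : Type) (S1 : seq (int * (A -> {compact-open, X1 -> Y})))
    (S2 : seq (int * (A -> {compact-open, X2 -> Y})))
  : seq (int * (A -> {compact-open, wedge2 X1 X2 -> Y})) :=
  [seq (p.1 * q.1, wedge2_join p.2 q.2) | p <- S1, q <- S2].

Lemma coef_agree_wedge2_chain (A : Type) (U : set A) S1 S2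
    (g : A -> {compact-open, wedge2 X1 X2 -> Y}) :
  chain_based_on U S1 -> chain_based_on U S2 ->
  coef (agree_on U) (wedge2_chain S1 S2) g =
  coef (agree_on U) S1 (fun t => g t \o wedge2_lift X1 X2 true) *
  coef (agree_on U) S2 (fun t => g t \o wedge2_lift X1 X2 false).
Proof.
move=> bS1 bS2; apply: coef_allpairs => p q S1p S2q; apply: agree_on_wedge2 => t Ut.
by rewrite bS1 ?bS2.
Qed.

Lemma combine_seq_wedge2_chain (E : finType) (l : seq {set E}) (U : set (Simp E))
    S1 S2 (g : Simp E -> {compact-open, wedge2 X1 X2 -> Y}) :
  chain_based_on U S1 -> chain_based_on U S2 ->
  coef (agree_on U) (combine_seq (cstmap (wedge2 X1 X2) Y) l (wedge2_chain S1 S2)) g =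
  coef (agree_on U) (combine_seq (cstmap X1 Y) l S1)
    (fun t => g t \o wedge2_lift X1 X2 true) *
  coef (agree_on U) (combine_seq (cstmap X2 Y) l S2)
    (fun t => g t \o wedge2_lift X1 X2 false).
Proof.
elim: l U => [|F l IH] U bS1 bS2 /=.
  have -> : [:: (1, fun _ => cstmap (wedge2 X1 X2) Y)] =
      wedge2_chain [:: (1, fun _ => cstmap X1 Y)] [:: (1, fun _ => cstmap X2 Y)].
    by rewrite /wedge2_chain /= mulr1 /wedge2_join wedge2_fun_cst.
  by apply: coef_agree_wedge2_chain => p [<-|//] t _.
rewrite !coef_glue IH ?coef_agree_wedge2_chain; first by ring.
all: move=> p Sp t [Ut _]; by [apply: bS1 | apply: bS2].
Qed.

Lemma fissile_wedge2_chain (E : finType) S1 S2 :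
  chain_based_on (@simplex E) S1 -> chain_based_on (@simplex E) S2 ->
  fissile (cstmap X1 Y : {compact-open, X1 -> Y}) S1 ->
  fissile (cstmap X2 Y : {compact-open, X2 -> Y}) S2 ->
  fissile (cstmap (wedge2 X1 X2) Y : {compact-open, wedge2 X1 X2 -> Y})
    (wedge2_chain S1 S2).
Proof.
move=> bS1 bS2 fS1 fS2 A lA g.
have LS : layout_space A `<=` @simplex E by move=> t [F _ []].
have bS1L : chain_based_on (layout_space A) S1 by move=> p Sp t /LS; apply: bS1.
have bS2L : chain_based_on (layout_space A) S2 by move=> p Sp t /LS; apply: bS2.
rewrite coef_agree_wedge2_chain // (fS1 A lA) (fS2 A lA) !combineE.
by rewrite combine_seq_wedge2_chain.
Qed.

End WedgeChain.

Lemma coef_cons_fs_neg (T G : Type) (P : T -> G -> Prop) (w : T) s g :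
  coef P ((1, w) :: fs_neg s) g = (if `[< P w g >] then 1 else 0) - coef P s g.
Proof. by rewrite coef_cons coef_fs_neg. Qed.

Section WedgePull.
Variables (X1 X2 : ptopologicalType).

(* A point of the wedge may lie on both summands (the wedge point does), and
   is then pulled back to both. *)
Definition wedge2_pull (A : Type) (b : bool) (q : seq (A * wedge2 X1 X2))
  : seq (A * (if b then X1 else X2)) :=
  [seq (j.1, xget point [set y | wedge2_lift X1 X2 b y = j.2]) | j <- q &
     `[< exists y, wedge2_lift X1 X2 b y = j.2 >]].

Lemma size_wedge2_pull (A : Type) b (q : seq (A * wedge2 X1 X2)) :
  (size (wedge2_pull b q) <= size q)%N.
Proof. by rewrite size_map size_filter count_size. Qed.

Lemma In_wedge2_pull (A : Type) b (q : seq (A * wedge2 X1 X2)) j' :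
  List.In j' (wedge2_pull b q) ->
  exists2 j, List.In j q & j'.1 = j.1 /\ wedge2_lift X1 X2 b j'.2 = j.2.
Proof.
move=> /In_map_filter [j [qj /asboolP jb ->]]; exists j => //.
by split=> //; have := xgetPex point jb.
Qed.

Lemma wedge2_pull_In (A : Type) b (q : seq (A * wedge2 X1 X2)) j y :
  List.In j q -> wedge2_lift X1 X2 b y = j.2 ->
  exists y', List.In (j.1, y') (wedge2_pull b q) /\ wedge2_lift X1 X2 b y' = j.2.
Proof.
move=> qj yj; have jb : exists y, wedge2_lift X1 X2 b y = j.2 by exists y.
exists (xget point [set y | wedge2_lift X1 X2 b y = j.2]); split.
  by apply/In_map_filter; exists j; split=> //; apply/asboolP.
by have := xgetPex point jb.
Qed.

Variables (E : finType) (Y : ptopologicalType).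

Lemma wr_agree_wedge2_pull b (W : Simp E -> wedge2 X1 X2 -> Y)
    (Wb : Simp E -> (if b then X1 else X2) -> Y) q g :
  (forall j, List.In j q -> forall y, W j.1 (wedge2_lift X1 X2 b y) = Wb j.1 y) ->
  wr_agree (wedge2_pull b q) Wb (fun j => g (j.1, wedge2_lift X1 X2 b j.2)) <->
  (forall j, List.In j q -> (exists y, wedge2_lift X1 X2 b y = j.2) -> W j.1 j.2 = g j).
Proof.
move=> WWb; split=> [Wbg [u x] qj [y /= yx]|Wg j' /In_wedge2_pull [j qj [j'j yj]]].
  have [y' [qy' /= <-]] := wedge2_pull_In qj yx.
  by rewrite (WWb _ qj) (Wbg _ qy').
rewrite j'j -(WWb _ qj) yj -surjective_pairing.
by apply: Wg => //; exists j'.2.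
Qed.

Lemma wr_agree_wedge2 (W : Simp E -> wedge2 X1 X2 -> Y) (W1 : Simp E -> X1 -> Y)
    (W2 : Simp E -> X2 -> Y) q g :
  (forall j, List.In j q -> forall y, W j.1 (wedge2_lift X1 X2 true y) = W1 j.1 y) ->
  (forall j, List.In j q -> forall y, W j.1 (wedge2_lift X1 X2 false y) = W2 j.1 y) ->
  wr_agree q W g <->
  wr_agree (wedge2_pull true q) W1 (fun j => g (j.1, wedge2_lift X1 X2 true j.2)) /\
  wr_agree (wedge2_pull false q) W2 (fun j => g (j.1, wedge2_lift X1 X2 false j.2)).
Proof.
move=> WW1 WW2; rewrite (@wr_agree_wedge2_pull true _ _ _ g WW1).
rewrite (@wr_agree_wedge2_pull false _ _ _ g WW2).
split=> [Wg|[W1g W2g] j qj]; first by split=> j qj _; apply: Wg.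
by case: (wedge2_liftP j.2) => -[y yj]; [apply: W1g|apply: W2g] => //; exists y.
Qed.

End WedgePull.

Lemma simplex_map_into_chain_based (E : finType) (X Y : ptopologicalType) (a : X -> Y)
    (S : seq (int * (Simp E -> {compact-open, X -> Y}))) :
  (forall p, List.In p S -> simplex_map_into a p.2) -> chain_based_on (@simplex E) S.
Proof. by move=> mS p Sp t St; case: (path_comp_based ((mS p Sp).2 t St)). Qed.

Section WedgeChainFiltration.
Variables (X1 X2 Y : ptopologicalType) (E : finType).

Lemma simplex_map_into_wedge2_chain (a1 : X1 -> Y) (a2 : X2 -> Y)
    (S1 : seq (int * (Simp E -> {compact-open, X1 -> Y})))
    (S2 : seq (int * (Simp E -> {compact-open, X2 -> Y}))) :
  compact [set: X1] -> compact [set: X2] -> hausdorff_space X1 -> hausdorff_space X2 ->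
  (forall p, List.In p S1 -> simplex_map_into a1 p.2) ->
  (forall p, List.In p S2 -> simplex_map_into a2 p.2) ->
  forall p, List.In p (wedge2_chain S1 S2) -> simplex_map_into (wedge2_fun a1 a2) p.2.
Proof.
move=> cX1 cX2 hX1 hX2 mS1 mS2 p Sp.
have [p1 [p2 [S1p1 S2p2 ->]]] := In_allpairs Sp.
exact: simplex_map_into_wedge2 (mS1 _ S1p1) (mS2 _ S2p2).
Qed.

Lemma coef_wr_agree_wedge2_chain (q : seq (Simp E * wedge2 X1 X2))
    (S1 : seq (int * (Simp E -> {compact-open, X1 -> Y})))
    (S2 : seq (int * (Simp E -> {compact-open, X2 -> Y})))
    (g : Simp E * wedge2 X1 X2 -> Y) :
  (forall j, List.In j q -> simplex j.1) ->
  chain_based_on (@simplex E) S1 -> chain_based_on (@simplex E) S2 ->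
  coef (wr_agree q) (wedge2_chain S1 S2) g =
  coef (wr_agree (wedge2_pull true q)) S1
    (fun j => g (j.1, wedge2_lift X1 X2 true j.2)) *
  coef (wr_agree (wedge2_pull false q)) S2
    (fun j => g (j.1, wedge2_lift X1 X2 false j.2)).
Proof.
move=> qS bS1 bS2; apply: coef_allpairs => p1 p2 S1p1 S2p2.
have p12 j : List.In j q -> p1.2 j.1 point = p2.2 j.1 point.
  by move=> qj; rewrite bS1 ?bS2 //; apply: qS.
by apply: wr_agree_wedge2 => j qj y;
  [apply: wedge2_fun_lift1|apply: wedge2_fun_lift2]; apply: p12.
Qed.

Lemma in_filtration_wedge2_chain (k : nat) (a1 : X1 -> Y) (a2 : X2 -> Y)
    (c : wedge2 X1 X2 -> Y)
    (S1 : seq (int * (Simp E -> {compact-open, X1 -> Y})))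
    (S2 : seq (int * (Simp E -> {compact-open, X2 -> Y}))) :
  (forall x, c (wedge2_lift X1 X2 true x) = a1 x) ->
  (forall x, c (wedge2_lift X1 X2 false x) = a2 x) ->
  chain_based_on (@simplex E) S1 -> chain_based_on (@simplex E) S2 ->
  in_filtration k ((1, fun _ => a1 : {compact-open, X1 -> Y}) :: fs_neg S1) ->
  in_filtration k ((1, fun _ => a2 : {compact-open, X2 -> Y}) :: fs_neg S2) ->
  in_filtration k
    ((1, fun _ => c : {compact-open, wedge2 X1 X2 -> Y}) :: fs_neg (wedge2_chain S1 S2)).
Proof.
move=> ca1 ca2 bS1 bS2 iS1 iS2 q qk qS g.
have pullP b : (size (wedge2_pull b q) < k)%N /\
    forall j, List.In j (wedge2_pull b q) -> simplex j.1.
  split; first exact: leq_ltn_trans (size_wedge2_pull b q) qk.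
  by move=> j /In_wedge2_pull [j0 qj0 [-> _]]; apply: qS.
have [k1 S1q] := pullP true; have [k2 S2q] := pullP false.
move: (iS1 _ k1 S1q (fun j => g (j.1, wedge2_lift X1 X2 true j.2))).
move: (iS2 _ k2 S2q (fun j => g (j.1, wedge2_lift X1 X2 false j.2))).
rewrite !coef_cons_fs_neg coef_wr_agree_wedge2_chain //.
move=> /eqP; rewrite subr_eq0 => /eqP <- /eqP; rewrite subr_eq0 => /eqP <-.
rewrite (asbool_equiv_eq (wr_agree_wedge2 (W1 := fun _ => a1) (W2 := fun _ => a2) g
  (fun j _ => ca1) (fun j _ => ca2))) asbool_and.
by case: `[< _ >]; case: `[< _ >]; rewrite /=; ring.
Qed.

End WedgeChainFiltration.

Theorem corollary7p3 (X1 X2 Y : ptopologicalType) (r : nat)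
    (a1 : X1 -> Y) (a2 : X2 -> Y) :
  cellular X1 -> cellular X2 -> cellular Y ->
  compact [set: X1]%classic -> compact [set: X2]%classic ->
  based_map a1 -> based_map a2 ->
  strongly_similar r (cstmap X1 Y) a1 ->
  strongly_similar r (cstmap X2 Y) a2 ->
  forall c : wedge2 X1 X2 -> Y,
    (forall x : X1, c (@wedge_lift bool _ _ true x) = a1 x) ->
    (forall x : X2, c (@wedge_lift bool _ _ false x) = a2 x) ->
    strongly_similar r (cstmap (wedge2 X1 X2) Y) c.
Proof.
move=> [hX1 _] [hX2 _] _ cX1 cX2 _ _ sim1 sim2 c ca1 ca2 E E0.
have [S1 [mS1 fS1 iS1]] := sim1 E E0.
have [S2 [mS2 fS2 iS2]] := sim2 E E0.
have bS1 := simplex_map_into_chain_based mS1.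
have bS2 := simplex_map_into_chain_based mS2.
exists (wedge2_chain S1 S2); split.
- by rewrite -wedge2_fun_cst; apply: simplex_map_into_wedge2_chain.
- exact: fissile_wedge2_chain.
- exact: (in_filtration_wedge2_chain ca1 ca2 bS1 bS2 iS1 iS2).
Qed.
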